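(* Let $A$ be the $N\times N$ tridiagonal matrix described below, block partitioned as $A = \begin{bmatrix} A_{LL} & A_{LI} \\ A_{IL} & A_{II}\end{bmatrix}$, and let $M = \begin{bmatrix} A_{LL} & A_{LI} \\ A_{IL} & M_{II}\end{bmatrix}$, where $M_{II}$ is the upper triangular part (including the diagonal) of $A_{II}$. Assume that there is a constant, $\alpha$, such that the discretization mesh satisfies $\alpha/N \leq h_i$ for $N_L+1 \leq i \leq N$. Then, any eigenvalue, $\lambda$, of $M^{-1}A$ satisfies \[ 1-\frac{8\varepsilon N}{\underline{C}\alpha} \leq \lambda \leq 1, \] where $\underline{C} > 0$ is the lower bound on $c(x)$.
   Context: Consider $-\varepsilon u'' - c(x)u' + r(x)u = f$ on $(0,1)$, $u(0)=u(1)=0$, with $\varepsilon\in(0,1]$, $0<\underline{C}\le c(x)\le\overline{C}$ and $r(x)\ge 0$ on $[0,1]$. On a mesh $0=x_0<x_1<\dots<x_N=1$ with $h_i = x_i - x_{i-1}$, $\bar h_i = (h_i+h_{i+1})/2$, $c_i=c(x_i)$, $r_i=r(x_i)$, $A$ is the tridiagonal upwind finite-difference matrix whose row $i$ has stencil $\left[ -\frac{\varepsilon}{h_i\bar h_i} , \frac{\varepsilon}{\bar h_i}\left(\frac{1}{h_i} + \frac{1}{h_{i+1}}\right) + \frac{c_i}{h_{i+1}} + r_i , -\frac{\varepsilon}{h_{i+1}\bar h_i} -\frac{c_i}{h_{i+1}} \right]$. The unknowns are split into a layer set $L$ (first $N_L$ indices, fine meshwidths near the layer, including the transition point) and an interior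 set $I$ (remaining $N_I$ indices), with $N=N_L+N_I$. *)

From HB Require Import structures.
From mathcomp Require Import all_boot all_order all_algebra.
From mathcomp Require Import complex.
Set Implicit Arguments. Unset Strict Implicit. Unset Printing Implicit Defensive.
Import Order.TTheory GRing.Theory Num.Theory.
Local Open Scope ring_scope.

Section Upwind.
Variable R : realFieldType.

Definition meshw (x : nat -> R) (i : nat) : R := x i - x i.-1.
Definition meshwbar (x : nat -> R) (i : nat) : R :=
  (meshw x i + meshw x i.+1) / 2.

(* The upwind finite-difference matrix on the interior nodes x_1 .. x_n
   (mesh x_0 < ... < x_{n+1}); row/column k : 'I_n corresponds to node
   i = k+1.  Row i has stencil
   [ -eps/(h_i hbar_i),
      eps/hbar_i (1/h_i + 1/h_{i+1}) + c_i/h_{i+1} + r_i,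
     -eps/(h_{i+1} hbar_i) - c_i/h_{i+1} ]. *)
Definition upwindA (n : nat) (eps : R) (x : nat -> R) (c r : R -> R)
  : 'M[R]_n :=
  \matrix_(k < n, j < n)
    let i := k.+1 in
    let hi := meshw x i in
    let hi1 := meshw x i.+1 in
    let hb := meshwbar x i in
    if (j : nat) == (k : nat) then
      eps / hb * (hi^-1 + hi1^-1) + c (x i) / hi1 + r (x i)
    else if (j.+1 == (k : nat))%N then - (eps / (hi * hb))
    else if ((j : nat) == k.+1)%N then - (eps / (hi1 * hb)) - c (x i) / hi1
    else 0.

Definition upper_part (m : nat) (B : 'M[R]_m) : 'M[R]_m :=
  \matrix_(i < m, j < m) if (i <= j)%N then B i j else 0.

Definition precM (NL NI : nat) (A : 'M[R]_(NL + NI)) : 'M[R]_(NL + NI) :=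
  block_mx (ulsubmx A) (ursubmx A) (dlsubmx A) (upper_part (drsubmx A)).

End Upwind.

(* Write M^-1 A w = lambda w as A w = lambda M w and put mu = 1 - lambda.  In the
   layer block, and in the first interior row, M agrees with A, so w solves the
   M-matrix recurrence d_k w_k = l_k w_(k-1) + u_k w_(k+1) with w_0 = 0; every such
   solution is a complex multiple of one nondecreasing positive real profile, hence
   w_NL = phi w_(NL+1) with 0 <= phi <= 1.  In the remaining interior rows
   mu (d_k w_k - u_k w_(k+1)) = l_k w_(k-1).  Choosing rho with rho^2 = mu, the
   scaled vector z_j = rho^j w_(NL+j) satisfies the three-term pencil
   rho e_j z_j = l_j z_(j-1) + u_j z_(j+1) with Dirichlet ends (e = d, except
   e_1 = d - l phi >= u), which a positive diagonal scaling t makes symmetric.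
   Pairing row j with t_j conj(z_j) and summing, the imaginary parts telescope to 0
   and the real parts are 2 Re sum t_j u_j conj(z_j) z_(j+1); hence rho is real and,
   by AM-GM and l_j <= s^2 u_j, |rho| <= 2 s.  The mesh bound alpha/N <= h_i gives
   s^2 = 2 eps N / (Clo alpha), so lambda = 1 - rho^2 lies in [1 - 4 s^2, 1]. *)

From HB Require Import structures.
From mathcomp Require Import all_boot all_order all_algebra.
From mathcomp Require Import complex.
From mathcomp Require Import lra ring zify.
Set Implicit Arguments. Unset Strict Implicit. Unset Printing Implicit Defensive.
Import Order.TTheory GRing.Theory Num.Theory.
Local Open Scope ring_scope.

Local Open Scope complex_scope.

Lemma sumr_shift (V : zmodType) n (F : nat -> V) :
  \sum_(0 <= k < n) F k.+1 = \sum_(0 <= k < n) F k + (F n - F 0).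
Proof.
rewrite -(telescope_sumr F (leq0n n)) -big_split /=.
by apply: eq_bigr => k _; rewrite addrC subrK.
Qed.

Section ComplexProducts.
Variable R : rcfType.
Implicit Types z w : R[i].

Definition cdot z w : R := complex.Re z * complex.Re w + complex.Im z * complex.Im w.
Definition ccross z w : R := complex.Re z * complex.Im w - complex.Im z * complex.Re w.

Lemma cdotC z w : cdot z w = cdot w z.
Proof. by rewrite /cdot mulrC [complex.Im z * _]mulrC. Qed.

Lemma ccrossC z w : ccross z w = - ccross w z.
Proof. by rewrite /ccross; ring. Qed.

Lemma cdot0 z : cdot 0 z = 0.
Proof. by rewrite /cdot !mul0r addr0. Qed.

Lemma ccross0 z : ccross 0 z = 0.
Proof. by rewrite /ccross !mul0r subrr. Qed.

Lemma cdot_ge0 z : 0 <= cdot z z.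
Proof. by rewrite /cdot addr_ge0 // -expr2 sqr_ge0. Qed.

Lemma cdot_gt0 z : z != 0 -> 0 < cdot z z.
Proof.
case: z => a b nz; rewrite lt_def cdot_ge0 andbT /cdot /=.
rewrite paddr_eq0 -?expr2 ?sqr_ge0 // !sqrf_eq0.
by apply: contra nz => /andP [/eqP -> /eqP ->].
Qed.

Lemma AMGM_cdot (s : R) z w :
  2 * s * `|cdot z w| <= s ^+ 2 * cdot z z + cdot w w.
Proof.
case: z w => [a b] [a' b']; rewrite /cdot /=.
have := sqr_ge0 (s * a - a'); have := sqr_ge0 (s * b - b').
have := sqr_ge0 (s * a + a'); have := sqr_ge0 (s * b + b').
by case: (lerP 0 (a * a' + b * b')) => h; [rewrite ger0_norm | rewrite ltr0_norm]; nra.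
Qed.

Lemma row_energy (rho z0 z1 z2 : R[i]) (l e u : R) :
  rho * (e%:C * z1) = l%:C * z0 + u%:C * z2 ->
  complex.Re rho * (e * cdot z1 z1) = l * cdot z1 z0 + u * cdot z1 z2 /\
  complex.Im rho * (e * cdot z1 z1) = l * ccross z1 z0 + u * ccross z1 z2.
Proof.
case: rho z0 z1 z2 => [p q] [a0 b0] [a1 b1] [a2 b2] /eqP.
rewrite eq_complex /cdot /ccross /= => /andP [/eqP hRe /eqP hIm].
have e1 := congr1 ( *%R a1) hRe; have e2 := congr1 ( *%R b1) hIm.
have e3 := congr1 ( *%R b1) hRe; have e4 := congr1 ( *%R a1) hIm.
rewrite /= in e1 e2 e3 e4; split; lra.
Qed.

End ComplexProducts.

Section ThreeTermRecurrence.
Variables (R : rcfType) (m : nat) (l d u : nat -> R).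
Hypothesis coef : forall k, (0 < k <= m)%N -> 0 <= l k /\ 0 < u k /\ l k + u k <= d k.

Fixpoint profile_pair (k : nat) : R * R :=
  if k is k'.+1 then let: (a, b) := profile_pair k' in (b, (d k * b - l k * a) / u k)
  else (0, 1).

Definition profile (k : nat) : R := (profile_pair k).1.

Lemma profile_pairE k : profile_pair k = (profile k, profile k.+1).
Proof. by rewrite /profile /=; case: (profile_pair k). Qed.

Lemma profile_rec k : (0 < k <= m)%N ->
  d k * profile k = l k * profile k.-1 + u k * profile k.+1.
Proof.
case: k => // k /coef [_ [u_gt0 _]].
by rewrite /profile /= profile_pairE /= [u _ * _]mulrC divfK ?gt_eqF // addrC subrK.
Qed.

Lemma profile_mono k : (k <= m)%N -> 0 <= profile k <= profile k.+1.
Proof.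
elim: k => [|k IH] km; first by rewrite /profile /= ler01 lexx.
have /andP [pk0 pk1] := IH (ltnW km).
have km' : (0 < k.+1 <= m)%N by [].
have [l_ge0 [u_gt0 lud]] := coef km'.
have rec := profile_rec km'; rewrite (le_trans pk0 pk1) /=.
rewrite -(ler_pM2l u_gt0); nra.
Qed.

Lemma profile_ge1 k : (0 < k <= m.+1)%N -> 1 <= profile k.
Proof.
elim: k => [//|[|k] IH] /andP [_ km]; first by rewrite /profile.
apply: le_trans (IH _) _; first lia.
by have /andP [] := @profile_mono k.+1 km.
Qed.

Lemma profile_gt0 k : (0 < k <= m.+1)%N -> 0 < profile k.
Proof. by move/profile_ge1; apply: lt_le_trans ltr01. Qed.

Variable z : nat -> R[i].
Hypothesis z0 : z 0 = 0.
Hypothesis zrec : forall k, (0 < k <= m)%N ->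
  (d k)%:C * z k = (l k)%:C * z k.-1 + (u k)%:C * z k.+1.

Lemma recurrence_profile {k} : (k <= m.+1)%N -> z k = (profile k)%:C * z 1.
Proof.
suff step j : (j <= m)%N -> z j = (profile j)%:C * z 1 /\ z j.+1 = (profile j.+1)%:C * z 1.
  by case: k => [|k] km; [rewrite z0 /profile /= mul0r | case: (step k km)].
elim: j => [|j IH] jm; first by rewrite z0 /profile /= mul0r mul1r.
have [zj zj1] := IH (ltnW jm); split => //.
have jm' : (0 < j.+1 <= m)%N by [].
have [_ [u_gt0 _]] := coef jm'.
have u_neq0 : (u j.+1)%:C != 0 by rewrite fmorph_eq0 gt_eqF.
apply: (mulfI u_neq0); rewrite mulrA -rmorphM.
have -> : u j.+1 * profile j.+2 = d j.+1 * profile j.+1 - l j.+1 * profile j.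
  by rewrite (profile_rec jm') addrC addKr.
have -> : (u j.+1)%:C * z j.+2 = (d j.+1)%:C * z j.+1 - (l j.+1)%:C * z j.
  by rewrite (zrec jm') addrC addKr.
by rewrite zj zj1 rmorphB !rmorphM /=; ring.
Qed.

Lemma recurrence_eq0 : z m.+1 = 0 -> forall k, (k <= m.+1)%N -> z k = 0.
Proof.
move=> zm k km; have z1 : z 1 = 0.
  move: zm; rewrite (recurrence_profile (leqnn _)) => /eqP.
  by rewrite mulf_eq0 fmorph_eq0 gt_eqF ?profile_gt0 ?leqnn // => /eqP.
by rewrite recurrence_profile // z1 mulr0.
Qed.

Lemma recurrence_ratio : exists2 phi : R, 0 <= phi <= 1 & z m = phi%:C * z m.+1.
Proof.
have p_gt0 : 0 < profile m.+1 by rewrite profile_gt0 ?leqnn.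
exists (profile m / profile m.+1).
  have /andP [p0 p1] := profile_mono (leqnn m).
  by rewrite divr_ge0 ?(ltW p_gt0) //= ler_pdivrMr // mul1r.
rewrite (recurrence_profile (leqnn _)) (recurrence_profile (leqnSn _)).
by rewrite mulrA -rmorphM divfK ?gt_eqF.
Qed.

End ThreeTermRecurrence.

Section SymmetrizablePencil.
Variables (R : rcfType) (n : nat) (l e u : nat -> R) (s : R).
Hypothesis s_gt0 : 0 < s.
Hypothesis u_gt0 : forall k, (0 < k <= n)%N -> 0 < u k.
Hypothesis u_le_e : forall k, (0 < k <= n)%N -> u k <= e k.
Hypothesis l_gt0 : forall k, (1 < k <= n)%N -> 0 < l k.
Hypothesis l_le_u : forall k, (1 < k <= n)%N -> l k <= s ^+ 2 * u k.

Fixpoint symmetrizer (k : nat) : R :=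
  if k is k'.+1 then (if k' is 0 then 1 else symmetrizer k' * u k' / l k) else 1.

Local Notation t := symmetrizer.

Lemma symmetrizerSS k : t k.+2 = t k.+1 * u k.+1 / l k.+2.
Proof. by []. Qed.

Arguments symmetrizer : simpl never.

Lemma symmetrizer_gt0 k : (k <= n)%N -> 0 < t k.
Proof.
elim: k => [|[|k] IH] kn //; rewrite symmetrizerSS.
by rewrite divr_gt0 ?mulr_gt0 ?IH ?u_gt0 ?l_gt0 //; lia.
Qed.

Lemma symmetrizer_sym k : (1 < k <= n)%N -> t k * l k = t k.-1 * u k.-1.
Proof.
by case: k => [|[|k]] // kn; rewrite symmetrizerSS divfK // gt_eqF // l_gt0.
Qed.

Variables (rho : R[i]) (z : nat -> R[i]).
Hypothesis z0 : z 0 = 0.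
Hypothesis zn : z n.+1 = 0.
Hypothesis zrec : forall k, (0 < k <= n)%N ->
  rho * ((e k)%:C * z k) = (l k)%:C * z k.-1 + (u k)%:C * z k.+1.
Hypothesis z_neq0 : exists2 k, (0 < k <= n)%N & z k != 0.

Let energy := \sum_(0 <= k < n) t k.+1 * e k.+1 * cdot (z k.+1) (z k.+1).
Let flux k := t k * u k * cdot (z k) (z k.+1).
Let mass k := t k * u k * cdot (z k) (z k).

Lemma energy_gt0 : 0 < energy.
Proof.
have [j /andP [j0 jn] zj] := z_neq0.
have e_gt0 k : (0 < k <= n)%N -> 0 < e k.
  by move=> kn; exact: lt_le_trans (u_gt0 kn) (u_le_e kn).
have term_ge0 (k : 'I_n) : 0 <= t k.+1 * e k.+1 * cdot (z k.+1) (z k.+1).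
  by rewrite !mulr_ge0 ?cdot_ge0 ?ltW ?symmetrizer_gt0 ?e_gt0 //= ltn_ord.
have jn' : (j.-1 < n)%N by lia.
rewrite /energy big_mkord (bigD1 (Ordinal jn')) //= prednK //.
rewrite ltr_pwDl ?sumr_ge0 // !mulr_gt0 ?cdot_gt0 ?symmetrizer_gt0 ?e_gt0 ?jn ?j0 //.
Qed.

Lemma symmetrizer_link k (F : R) : (k < n)%N -> (k = 0%N -> F = 0) ->
  t k.+1 * l k.+1 * F = t k * u k * F.
Proof.
case: k => [|k] kn F0; first by rewrite F0 // !mulr0.
by rewrite symmetrizer_sym //; lia.
Qed.

Lemma Im_energy : complex.Im rho * energy = 0.
Proof.
pose f k := t k * u k * ccross (z k) (z k.+1).
transitivity (\sum_(0 <= k < n) (f k.+1 - f k)).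
  rewrite /energy mulr_sumr; apply: eq_big_nat => k kn.
  have [_ hIm] := row_energy (@zrec k.+1 kn).
  rewrite -mulrA mulrCA hIm /= [ccross _ (z k)]ccrossC.
  rewrite mulrDr !mulrN !mulrA symmetrizer_link; [by rewrite addrC | lia |].
  by move=> k0; rewrite k0 z0 ccross0.
by rewrite telescope_sumr // /f zn z0 ccross0 ccrossC ccross0 oppr0 !mulr0 subrr.
Qed.

Lemma Re_energy : complex.Re rho * energy = 2 * \sum_(0 <= k < n) flux k.+1.
Proof.
transitivity (\sum_(0 <= k < n) (flux k + flux k.+1)).
  rewrite /energy mulr_sumr; apply: eq_big_nat => k kn.
  have [hRe _] := row_energy (@zrec k.+1 kn).
  rewrite -mulrA mulrCA hRe /= [cdot _ (z k)]cdotC mulrDr !mulrA.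
  rewrite symmetrizer_link; [by [] | lia | by move=> ->; rewrite z0 cdot0].
rewrite big_split /= sumr_shift /flux zn z0 [cdot _ 0]cdotC !cdot0 !mulr0 subrr.
by rewrite addr0 mulr_natl mulr2n.
Qed.

Lemma flux_bound k : (0 < k <= n)%N -> 2 * `|flux k| <= s * (mass k + mass k.+1).
Proof.
move=> kn; have mass_ge0 j : (0 < j <= n)%N -> 0 <= mass j.
  by move=> jn; rewrite !mulr_ge0 ?cdot_ge0 ?ltW ?u_gt0 ?symmetrizer_gt0 //; lia.
have [kn'|kn'] := ltnP k n; last first.
  have -> : k = n by lia.
  rewrite /flux /mass zn [cdot (z n) _]cdotC !cdot0 !mulr0 normr0 mulr0 addr0.
  by apply: mulr_ge0 (ltW s_gt0) (mass_ge0 n _); lia.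
have tu_gt0 j : (0 < j <= n)%N -> 0 < t j * u j.
  by move=> jn; rewrite mulr_gt0 ?u_gt0 ?symmetrizer_gt0 //; lia.
have T0 := tu_gt0 k kn; have T1 : (0 < k.+1 <= n)%N by [].
have {}T1 := tu_gt0 _ T1.
have link : t k * u k <= s ^+ 2 * (t k.+1 * u k.+1).
  rewrite -(@symmetrizer_sym k.+1); last by lia.
  by rewrite mulrCA ler_wpM2l ?l_le_u ?ltW ?symmetrizer_gt0 //; lia.
have AM := AMGM_cdot s (z k) (z k.+1).
have N0 := cdot_ge0 (z k); have N1 := cdot_ge0 (z k.+1).
rewrite -(ler_pM2l s_gt0) /flux /mass normrM (gtr0_norm T0).
move: AM; set D := `|cdot (z k) (z k.+1)|; nra.
Qed.

Theorem symmetrizable_pencil_spectrum : complex.Im rho = 0 /\ `|complex.Re rho| <= 2 * s.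
Proof.
have E_gt0 := energy_gt0; split.
  by have /eqP := Im_energy; rewrite mulf_eq0 (gt_eqF E_gt0) orbF => /eqP.
have mass_le k : (k < n)%N -> mass k.+1 <= t k.+1 * e k.+1 * cdot (z k.+1) (z k.+1).
  move=> kn; rewrite ler_wpM2r ?cdot_ge0 // ler_wpM2l ?u_le_e ?ltW ?symmetrizer_gt0 //.
have n_gt0 : (0 < n)%N by case: z_neq0 => k /andP [k0 kn] _; apply: leq_trans kn.
have mass1 : 0 <= mass 1 by rewrite !mulr_ge0 ?cdot_ge0 ?ltW ?u_gt0 ?symmetrizer_gt0 ?n_gt0.
have massn : mass n.+1 = 0 by rewrite /mass zn cdot0 mulr0.
rewrite -(ler_pM2r E_gt0) -(gtr0_norm E_gt0) -normrM Re_energy normrM ger0_norm //.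
apply: le_trans (_ : 2 * \sum_(0 <= k < n) `|flux k.+1| <= _).
  by rewrite ler_wpM2l ?ler_norm_sum.
rewrite mulr_sumr (gtr0_norm E_gt0).
apply: le_trans (_ : \sum_(0 <= k < n) s * (mass k.+1 + mass k.+2) <= _).
  by apply: ler_sum_nat => k kn; apply: flux_bound; lia.
rewrite -mulr_sumr big_split /= (sumr_shift n (fun k => mass k.+1)) massn sub0r.
have : \sum_(0 <= k < n) mass k.+1 <= energy.
  by rewrite ler_sum_nat // => k /andP [_ /mass_le].
move: mass1; set S := \sum_(0 <= k < n) _; set m1 := mass _ => ? ?.
by rewrite [2 * s]mulrC -mulrA ler_pM2l //; lra.
Qed.

End SymmetrizablePencil.

Section GaussSeidel.
Variables (R : rcfType) (m n : nat) (l d u : nat -> R) (beta : R).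
Variables (mu : R[i]) (z : nat -> R[i]).
Hypothesis beta_gt0 : 0 < beta.
Hypothesis coef : forall k, (0 < k <= n)%N -> 0 < l k /\ 0 < u k /\ l k + u k <= d k.
Hypothesis l_le_u : forall k, (m.+1 < k <= n)%N -> l k <= beta * u k.
Hypothesis z0 : z 0 = 0.
Hypothesis zn : z n.+1 = 0.
Hypothesis z_neq0 : exists2 k, (0 < k <= n)%N & z k != 0.
Hypothesis layer_rows : forall k, (0 < k <= n)%N -> (k <= m.+1)%N ->
  (d k)%:C * z k = (l k)%:C * z k.-1 + (u k)%:C * z k.+1.
Hypothesis interior_rows : forall k, (m.+1 < k <= n)%N ->
  mu * ((d k)%:C * z k - (u k)%:C * z k.+1) = (l k)%:C * z k.-1.

Let layer_coef p : (p <= n)%N -> forall k, (0 < k <= p)%N ->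
  0 <= l k /\ 0 < u k /\ l k + u k <= d k.
Proof.
move=> pn k kp; have kn : (0 < k <= n)%N by lia.
by have [/ltW] := coef kn.
Qed.

Lemma interior_nonempty : (m < n)%N.
Proof.
rewrite ltnNge; apply/negP => nm; case: z_neq0 => k kn; apply/negP/negPn/eqP.
apply: (recurrence_eq0 (layer_coef (leqnn n)) z0) zn _ _; last by lia.
by move=> j jn; apply: layer_rows => //; lia.
Qed.

Lemma interior_neq0 : exists2 j, (0 < j <= n - m)%N & z (m + j) != 0.
Proof.
have mn := interior_nonempty.
have [zm|zm] := eqVneq (z m.+1) 0; last by exists 1%N; rewrite ?addn1 //; lia.
have [k kn zk] := z_neq0.
have mk : (m < k)%N.
  rewrite ltnNge; apply: contra zk => km; apply/eqP.
  apply: (recurrence_eq0 (layer_coef (ltnW mn)) z0) zm _ _; last by lia.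
  by move=> j jm; apply: layer_rows; lia.
by exists (k - m)%N; [lia | rewrite subnKC // ltnW].
Qed.

Section ScaledInterior.
Variables (phi : R) (rho : R[i]).
Hypothesis z_interface : z m = phi%:C * z m.+1.
Hypothesis rho_sqr : rho ^+ 2 = mu.

(* The interface row absorbs z_m = phi z_(m+1) into the diagonal e_1, and the
   powers of rho turn mu = rho^2 in the other rows into a pencil in rho. *)
Let e j := d (m + j) - (if j == 1%N then l (m + j) * phi else 0).
Let zs j := if j is 0 then 0 else rho ^+ j * z (m + j).

Lemma scaled_rows j : (0 < j <= n - m)%N ->
  rho * ((e j)%:C * zs j) = (l (m + j))%:C * zs j.-1 + (u (m + j))%:C * zs j.+1.
Proof.
case: j => [//|[|j]] jn.
  have row : (d m.+1)%:C * z m.+1 = (l m.+1)%:C * z m + (u m.+1)%:C * z m.+2.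
    by apply: layer_rows => //; lia.
  rewrite /e /zs /= !addn1 !addn2 mulr0 add0r rmorphB rmorphM /=.
  have -> : rho * (((d m.+1)%:C - (l m.+1)%:C * phi%:C) * (rho ^+ 1 * z m.+1)) =
    rho ^+ 2 * ((d m.+1)%:C * z m.+1 - (l m.+1)%:C * (phi%:C * z m.+1)) by ring.
  by rewrite -z_interface row addrC addKr mulrCA.
have row : mu * ((d (m + j.+2))%:C * z (m + j.+2) - (u (m + j.+2))%:C * z (m + j.+2).+1) =
    (l (m + j.+2))%:C * z (m + j.+2).-1 by apply: interior_rows; lia.
rewrite /e /zs /= !addnS subr0 /= in row *.
apply/eqP; rewrite -subr_eq0; apply/eqP.
transitivity (rho ^+ j.+1 * (rho ^+ 2 * ((d (m + j).+2)%:C * z (m + j).+2 -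
  (u (m + j).+2)%:C * z (m + j).+3) - (l (m + j).+2)%:C * z (m + j).+1)).
  by rewrite !exprS; ring.
by rewrite rho_sqr row subrr mulr0.
Qed.

End ScaledInterior.

Theorem gauss_seidel_mu_bound : complex.Im mu = 0 /\ 0 <= complex.Re mu <= 4 * beta.
Proof.
have mn := interior_nonempty.
have [phi /andP [phi0 phi1] zm] : exists2 phi, 0 <= phi <= 1 & z m = phi%:C * z m.+1.
  by apply: (recurrence_ratio (layer_coef (ltnW mn)) z0) => k km; apply: layer_rows; lia.
have [->|mu_neq0] := eqVneq mu 0; first by rewrite lexx mulr_ge0 ?ltW.
set rho := sqrtc mu; have rho2 : rho ^+ 2 = mu := sqr_sqrtc mu.
have rho_neq0 : rho != 0 by apply: contra mu_neq0 => /eqP r0; rewrite -rho2 r0 expr0n.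
have s_gt0 : 0 < Num.sqrt beta by rewrite sqrtr_gt0.
have s2 : Num.sqrt beta ^+ 2 = beta by rewrite sqr_sqrtr ?ltW.
have coefm k : (0 < k <= n - m)%N ->
    0 < l (m + k) /\ 0 < u (m + k) /\ l (m + k) + u (m + k) <= d (m + k).
  by move=> km; apply: coef; lia.
have [Im_rho Re_rho] : complex.Im rho = 0 /\ `|complex.Re rho| <= 2 * Num.sqrt beta.
  apply: (symmetrizable_pencil_spectrum s_gt0 _ _ _ _ _ _ (scaled_rows zm rho2)) => //.
  - by move=> k /coefm [_ []].
  - move=> k /coefm [l_gt0 [_ lud]]; case: eqP => _; last by rewrite subr0; lra.
    by have := ler_piMr (ltW l_gt0) phi1; lra.
  - by move=> k km; case: (coefm k) => //; lia.
  - by move=> k km; rewrite s2 l_le_u //; lia.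
  - by rewrite addnS (subnKC (ltnW mn)) zn mulr0.
  - have [j jn zj] := interior_neq0; exists j => //.
    by case: j jn zj => [//|j] _ zj; rewrite mulf_neq0 ?expf_neq0.
rewrite -rho2; move: Im_rho Re_rho; case: (rho) => p q /= -> p_le.
rewrite !mulr0 !mul0r addr0 subr0 -expr2 sqr_ge0; split => //=.
have -> : 4 * beta = (2 * Num.sqrt beta) ^+ 2 by rewrite exprMn s2 expr2 -natrM.
by rewrite -real_normK ?num_real // ler_sqr ?nnegrE ?mulr_ge0 ?sqrtr_ge0.
Qed.

End GaussSeidel.

Theorem gauss_seidel_spectrum (R : rcfType) (m n : nat) (l d u : nat -> R) (beta : R)
    (lambda : R[i]) (z : nat -> R[i]) :
  0 < beta ->
  (forall k, (0 < k <= n)%N -> 0 < l k /\ 0 < u k /\ l k + u k <= d k) ->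
  (forall k, (m.+1 < k <= n)%N -> l k <= beta * u k) ->
  z 0 = 0 -> z n.+1 = 0 -> (exists2 k, (0 < k <= n)%N & z k != 0) ->
  (forall k, (0 < k <= n)%N ->
    (d k)%:C * z k - (l k)%:C * z k.-1 - (u k)%:C * z k.+1 =
    lambda * ((d k)%:C * z k - (if (m.+1 < k)%N then 0 else (l k)%:C * z k.-1)
              - (u k)%:C * z k.+1)) ->
  complex.Im lambda = 0 /\ 1 - 4 * beta <= complex.Re lambda <= 1.
Proof.
move=> beta_gt0 coef l_le_u z0 zn z_neq0 rows.
have [->|lambda_neq1] := eqVneq lambda 1.
  by rewrite lexx andbT /= lerBlDr lerDl mulr_ge0 ?ltW.
have mu_neq0 : 1 - lambda != 0 by rewrite subr_eq0 eq_sym.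
have [||Im_mu /andP [Re_mu0 Re_mu]] :=
    gauss_seidel_mu_bound (mu := 1 - lambda) beta_gt0 coef l_le_u z0 zn z_neq0.
- move=> k kn km; have := rows k kn; rewrite ltnNge km /= => row.
  have : (1 - lambda) * ((d k)%:C * z k - (l k)%:C * z k.-1 - (u k)%:C * z k.+1) = 0.
    by rewrite mulrBl mul1r {1}row subrr.
  by move/eqP; rewrite mulf_eq0 (negbTE mu_neq0) -addrA -opprD subr_eq0 => /eqP.
- move=> k /andP [km kn]; have /rows : (0 < k <= n)%N by lia.
  rewrite km subr0 => row; rewrite mulrBl mul1r -row; ring.
by move: Im_mu Re_mu0 Re_mu; case: (lambda) => a b /=; lra.
Qed.

Lemma gauss_seidel_rows_eq0 (R : rcfType) (m n : nat) (l d u : nat -> R) (z : nat -> R[i]) :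
  (forall k, (0 < k <= n)%N -> 0 < l k /\ 0 < u k /\ l k + u k <= d k) ->
  z 0 = 0 -> z n.+1 = 0 ->
  (forall k, (0 < k <= n)%N ->
    (d k)%:C * z k - (if (m.+1 < k)%N then 0 else (l k)%:C * z k.-1) - (u k)%:C * z k.+1 = 0) ->
  forall k, (0 < k <= n)%N -> z k = 0.
Proof.
move=> coef z0 zn rows.
have d_gt0 k : (0 < k <= n)%N -> 0 < d k.
  by move=> /coef [l_gt0 [u_gt0 lud]]; lra.
have upper k : (m.+1 < k <= n.+1)%N -> z k = 0.
  suff back j : (m.+1 < n.+1 - j)%N -> z (n.+1 - j)%N = 0.
    by move=> /andP [mk kn]; rewrite -(subKn kn) back // subKn.
  elim: j => [|j IH] mj; first by rewrite subn0.
  have kn : (0 < n.+1 - j.+1 <= n)%N by lia.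
  have := rows _ kn; rewrite (_ : (m.+1 < n.+1 - j.+1)%N = true); last by lia.
  rewrite (_ : (n.+1 - j.+1).+1 = n.+1 - j)%N; last by lia.
  rewrite IH; last by lia.
  by rewrite subr0 mulr0 subr0 => /eqP; rewrite mulf_eq0 fmorph_eq0 gt_eqF ?d_gt0 // => /eqP.
pose p := minn m.+1 n.
have zp : z p.+1 = 0.
  have [mn|nm] := ltnP m.+1 n; last by have -> : p.+1 = n.+1 by rewrite /p; lia.
  have -> : p.+1 = m.+2 by rewrite /p; lia.
  by apply: upper; lia.
have coefp j : (0 < j <= p)%N -> 0 <= l j /\ 0 < u j /\ l j + u j <= d j.
  move=> jp; have jn : (0 < j <= n)%N by lia.
  by have [/ltW] := coef _ jn.
have recp j : (0 < j <= p)%N -> (d j)%:C * z j = (l j)%:C * z j.-1 + (u j)%:C * z j.+1.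
  move=> jp; have /rows : (0 < j <= n)%N by lia.
  rewrite (_ : (m.+1 < j)%N = false); last by lia.
  by move/eqP; rewrite -addrA -opprD subr_eq0 => /eqP.
move=> k kn; have [kp|pk] := leqP k p.+1; last by apply: upper; lia.
exact: (recurrence_eq0 coefp z0 recp zp).
Qed.

Section Tridiagonal.
Variable K : pzRingType.

(* Vectors and matrices are indexed from 0, mesh nodes from 1: entry j of v is node
   j.+1, so colseq v is 0, v_0, ..., v_(n-1), 0, 0, ... and row i of tridiag n lo di up
   carries the stencil of node i.+1. *)
Definition colseq n (v : 'cV[K]_n) (k : nat) : K :=
  if k is k'.+1 then (if insub k' is Some j then v j 0 else 0) else 0.

Lemma colseqE n (v : 'cV[K]_n) (j : 'I_n) : colseq v j.+1 = v j 0.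
Proof. by rewrite /colseq valK. Qed.

Lemma colseq_out n (v : 'cV[K]_n) k : (n < k)%N -> colseq v k = 0.
Proof. by case: k => [|k] // kn; rewrite /colseq insubN // -leqNgt. Qed.

Lemma colseq_sum n (v : 'cV[K]_n) k :
  colseq v k = \sum_(j < n) (if j.+1 == k then v j 0 else 0).
Proof.
have [kn|nk] := leqP k n; last first.
  rewrite colseq_out // big1 // => j _; case: eqP => // jk.
  by have := ltn_ord j; lia.
case: k kn => [|k] kn; first by rewrite big1.
rewrite (bigD1 (Ordinal kn)) // eqxx big1 ?addr0 => [|j].
  by rewrite -[k]/(nat_of_ord (Ordinal kn)) colseqE /= addr0.
move=> /eqP jn; case: eqP => // [[jk]]; case: jn; exact: val_inj.
Qed.

Lemma colseq_neq0 n (v : 'cV[K]_n) : v != 0 -> exists2 k, (0 < k <= n)%N & colseq v k != 0.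
Proof.
move=> v_neq0; have [i vi] : exists i : 'I_n, v i 0 != 0.
  apply/existsP; apply: contraR v_neq0 => /existsPn v0.
  by apply/eqP/matrixP => i j; rewrite (ord1 j) mxE; apply/eqP/negPn/v0.
by exists i.+1; rewrite ?colseqE //= ltn_ord.
Qed.

Definition tridiag n (lo di up : nat -> K) : 'M[K]_n :=
  \matrix_(i, j) if (j : nat) == i then di i.+1
                 else if j.+1 == i then lo i.+1
                 else if (j : nat) == i.+1 then up i.+1 else 0.

Lemma tridiag_mulmx n lo di up (v : 'cV[K]_n) (i : 'I_n) :
  (tridiag n lo di up *m v) i 0 =
  lo i.+1 * colseq v i + di i.+1 * colseq v i.+1 + up i.+1 * colseq v i.+2.
Proof.
rewrite mxE !colseq_sum !mulr_sumr -!big_split /=; apply: eq_bigr => j _.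
rewrite mxE !eqSS.
case: (eqVneq (j : nat) i) => [->|ji].
  by rewrite gtn_eqF // ltn_eqF // !mulr0 add0r addr0.
case: (eqVneq j.+1 i) => [<-|ji1]; first by rewrite ltn_eqF // !mulr0 !addr0.
case: (eqVneq (j : nat) i.+1) => [_|ji2]; first by rewrite !mulr0 !add0r.
by rewrite !mulr0 mul0r !addr0.
Qed.

End Tridiagonal.

Arguments colseq : simpl never.

Lemma map_tridiag (K L : pzRingType) (f : {additive K -> L}) n lo di up :
  map_mx f (tridiag n lo di up) = tridiag n (f \o lo) (f \o di) (f \o up).
Proof. by apply/matrixP => i j; rewrite !mxE !(fun_if f) raddf0. Qed.

Lemma precME (R : realFieldType) NL NI (A : 'M[R]_(NL + NI)) i j :
  precM A i j = if (NL <= j < i)%N then 0 else A i j.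
Proof.
rewrite /precM -[in RHS](submxK A).
case: (split_ordP i) => i' ->; case: (split_ordP j) => j' ->.
- by rewrite !block_mxEul /= leqNgt ltn_ord.
- by rewrite !block_mxEur /= leq_addr ltnNge (leq_trans (ltnW (ltn_ord i'))) ?leq_addr.
- by rewrite !block_mxEdl /= leqNgt ltn_ord.
- by rewrite !block_mxEdr /= leq_addr ltn_add2l /upper_part mxE leqNgt; case: ltnP.
Qed.

Lemma precM_tridiag (R : realFieldType) NL NI (lo di up : nat -> R) :
  precM (tridiag (NL + NI) lo di up) =
  tridiag (NL + NI) (fun i => if (NL.+1 < i)%N then 0 else lo i) di up.
Proof.
apply/matrixP => i j; rewrite precME !mxE.
case: eqP => [->|ji]; first by rewrite leqNgt ltnn andbF.
case: eqP => [<-|ji1]; first by rewrite ltnSn andbT !ltnS.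
by case: eqP => [->|_]; rewrite ?if_same // ltnNge leqnSn andbF.
Qed.

Section ColumnEigenvectors.
Variables (F : fieldType) (n : nat).
Implicit Types g : 'M[F]_n.

Lemma eigenvalue_unitmx g a : eigenvalue g a = (g - a%:M \notin unitmx).
Proof. by rewrite /eigenvalue /eigenspace kermx_eq0 row_free_unit. Qed.

Lemma eigenvalue_trmx g a : eigenvalue g^T a = eigenvalue g a.
Proof. by rewrite !eigenvalue_unitmx -unitmx_tr linearB /= tr_scalar_mx trmxK. Qed.

Lemma eigenvalue_colP g a :
  eigenvalue g a -> exists2 v : 'cV_n, g *m v = a *: v & v != 0.
Proof.
rewrite -eigenvalue_trmx => /eigenvalueP [v vg v_neq0].
by exists v^T; rewrite ?trmx_eq0 // -[g]trmxK -trmx_mul vg linearZ.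
Qed.

Lemma unitmxPn_col g : g \notin unitmx -> exists2 v : 'cV_n, g *m v = 0 & v != 0.
Proof.
move=> g_nonunit; have : eigenvalue g 0 by rewrite eigenvalue_unitmx raddf0 subr0.
by case/eigenvalue_colP => v; rewrite scale0r; exists v.
Qed.

End ColumnEigenvectors.

Theorem tridiag_gauss_seidel_spectrum (R : rcfType) (NL NI : nat) (l d u : nat -> R)
    (beta : R) (lambda : R[i]) :
  0 < beta ->
  (forall k, (0 < k <= NL + NI)%N -> 0 < l k /\ 0 < u k /\ l k + u k <= d k) ->
  (forall k, (NL.+1 < k <= NL + NI)%N -> l k <= beta * u k) ->
  let A := tridiag (NL + NI) (fun k => - l k) d (fun k => - u k) in
  eigenvalue (map_mx (real_complex R) (invmx (precM A) *m A)) lambda ->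
  complex.Im lambda = 0 /\ 1 - 4 * beta <= complex.Re lambda <= 1.
Proof.
move=> beta_gt0 coef l_le_u A Heig; set n := (NL + NI)%N.
set AC := map_mx (real_complex R) A; set MC := map_mx (real_complex R) (precM A).
have rowA (w : 'cV_n) (i : 'I_n) : (AC *m w) i 0 =
    (d i.+1)%:C * colseq w i.+1 - (l i.+1)%:C * colseq w i - (u i.+1)%:C * colseq w i.+2.
  by rewrite /AC /A map_tridiag tridiag_mulmx /= !rmorphN; ring.
have rowM (w : 'cV_n) (i : 'I_n) : (MC *m w) i 0 =
    (d i.+1)%:C * colseq w i.+1 - (if (NL.+1 < i.+1)%N then 0 else (l i.+1)%:C * colseq w i)
    - (u i.+1)%:C * colseq w i.+2.
  rewrite /MC /A precM_tridiag map_tridiag tridiag_mulmx /= !rmorphN /= (fun_if (real_complex R)).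
  by case: ifP => _; rewrite ?rmorph0 ?mul0r; ring.
have rows_of (P : nat -> Prop) : (forall i : 'I_n, P i.+1) -> forall k, (0 < k <= n)%N -> P k.
  by move=> H [|k] // kn; apply: (H (Ordinal kn)).
have MU : precM A \in unitmx.
  rewrite -(map_unitmx (real_complex R)) -/MC; apply: contraT => /unitmxPn_col [v Mv].
  case/colseq_neq0 => k kn /eqP [].
  apply: (gauss_seidel_rows_eq0 (m := NL) coef _ (colseq_out _ (leqnn _))) kn => //.
  by apply: rows_of => i; rewrite /= -rowM Mv mxE.
have [w Aw w_neq0] := eigenvalue_colP Heig.
rewrite map_mxM map_invmx -/AC -/MC in Aw.
have AwM : AC *m w = lambda *: (MC *m w).
  by rewrite scalemxAr -Aw !mulmxA mulmxV ?mul1mx // map_unitmx.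
apply: (gauss_seidel_spectrum (m := NL) (z := colseq w) beta_gt0 coef l_le_u) => //.
- exact: colseq_out.
- exact: colseq_neq0.
by apply: rows_of => i; rewrite /= -rowA -rowM AwM mxE.
Qed.

Local Close Scope complex_scope.

Section UpwindCoefficients.
Variables (R : realFieldType) (eps : R) (x : nat -> R) (c r : R -> R).

Definition upwind_sub (i : nat) : R := eps / (meshw x i * meshwbar x i).
Definition upwind_sup (i : nat) : R := eps / (meshw x i.+1 * meshwbar x i) + c (x i) / meshw x i.+1.
Definition upwind_diag (i : nat) : R := upwind_sub i + upwind_sup i + r (x i).

Lemma upwindA_tridiag n :
  upwindA n eps x c r = tridiag n (fun i => - upwind_sub i) upwind_diag (fun i => - upwind_sup i).
Proof.
apply/matrixP => i j; rewrite !mxE /= /upwind_diag /upwind_sub /upwind_sup opprD.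
by case: ifP => // _; rewrite !invfM; congr (_ + _); ring.
Qed.

End UpwindCoefficients.

Lemma upwind_sub_le (R : realFieldType) (eps : R) x c (Clo alpha Nr : R) i :
  0 < eps -> 0 < Clo -> 0 < alpha -> 0 < Nr ->
  0 < meshw x i -> 0 < meshw x i.+1 -> Clo <= c (x i) -> alpha / Nr <= meshw x i ->
  upwind_sub eps x i <= 2 * eps * Nr / (Clo * alpha) * upwind_sup eps x c i.
Proof.
rewrite /upwind_sub /upwind_sup /meshwbar.
set h := meshw x i; set h1 := meshw x i.+1 => eps_gt0 Clo_gt0 alpha_gt0 Nr_gt0 h_gt0 h1_gt0 Cc mesh.
have hh1_gt0 : 0 < h + h1 by rewrite addr_gt0.
have hb_gt0 : 0 < (h + h1) / 2 by rewrite divr_gt0.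
have beta_ge0 : 0 <= 2 * eps * Nr / (Clo * alpha) by rewrite ltW // !divr_gt0 ?mulr_gt0.
apply: le_trans (_ : _ <= 2 * eps * Nr / (Clo * alpha) * (Clo / h1)) _; last first.
  rewrite ler_wpM2l //; apply: (@le_trans _ _ (c (x i) / h1)).
    by rewrite ler_pM2r ?invr_gt0.
  by rewrite lerDr ltW // divr_gt0 // mulr_gt0.
have -> : 2 * eps * Nr / (Clo * alpha) * (Clo / h1) =
    eps / (h * ((h + h1) / 2)) * ((h * Nr / alpha) * ((h + h1) / h1)).
  by field; rewrite !gt_eqF.
rewrite ler_pMr; last by rewrite divr_gt0 // mulr_gt0.
apply: mulr_ege1; rewrite ler_pdivlMr // mul1r; first by rewrite -ler_pdivrMr.
by rewrite lerDr ltW.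
Qed.

Section UpwindMesh.
Variables (R : realFieldType) (N : nat) (eps Clo : R) (x : nat -> R) (c r : R -> R).
Hypothesis eps_gt0 : 0 < eps.
Hypothesis Clo_gt0 : 0 < Clo.
Hypothesis c_ge : forall t, 0 <= t <= 1 -> Clo <= c t.
Hypothesis r_ge0 : forall t, 0 <= t <= 1 -> 0 <= r t.
Hypothesis x0 : x 0%N = 0.
Hypothesis xN : x N = 1.
Hypothesis x_incr : forall i, (i < N)%N -> x i < x i.+1.

Lemma mesh_nondecr i j : (i <= j <= N)%N -> x i <= x j.
Proof.
move=> /andP [ij]; rewrite -(subnKC ij); elim: (j - i)%N => [|k IH] kN.
  by rewrite addn0.
by rewrite addnS (le_trans (IH _)) ?ltW ?x_incr //; lia.
Qed.

Lemma mesh_node01 i : (i <= N)%N -> 0 <= x i <= 1.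
Proof. by move=> iN; rewrite -x0 -xN !mesh_nondecr // iN ?leqnn. Qed.

Lemma meshw_gt0 i : (0 < i <= N)%N -> 0 < meshw x i.
Proof. by case: i => [|i] // /andP [_ iN]; rewrite subr_gt0 x_incr. Qed.

Lemma meshwbar_gt0 i : (i < N)%N -> 0 < meshwbar x i.
Proof.
move=> iN; have hi_ge0 : 0 <= meshw x i.
  case: i iN => [|i] iN; first by rewrite /meshw subrr.
  by apply/ltW/meshw_gt0; lia.
by rewrite divr_gt0 // ltr_wpDl // meshw_gt0.
Qed.

Lemma upwind_coef_gt0 k : (0 < k < N)%N ->
  0 < upwind_sub eps x k /\ 0 < upwind_sup eps x c k /\
  upwind_sub eps x k + upwind_sup eps x c k <= upwind_diag eps x c r k.
Proof.
move=> /andP [k0 kN]; have xk := mesh_node01 (ltnW kN).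
have hk : 0 < meshw x k by apply: meshw_gt0; lia.
have hk1 : 0 < meshw x k.+1 by apply: meshw_gt0; lia.
have ck : 0 < c (x k) by apply: lt_le_trans Clo_gt0 (c_ge xk).
split; first by rewrite divr_gt0 // mulr_gt0 // meshwbar_gt0.
split; first by rewrite addr_gt0 // divr_gt0 // mulr_gt0 // meshwbar_gt0.
by rewrite /upwind_diag lerDl r_ge0.
Qed.

Lemma upwind_sub_le_sup (NL : nat) (alpha : R) : 0 < alpha ->
  (forall i, (NL.+1 <= i <= N)%N -> alpha / N%:R <= meshw x i) ->
  forall k, (NL.+1 < k < N)%N ->
  upwind_sub eps x k <= 2 * eps * N%:R / (Clo * alpha) * upwind_sup eps x c k.
Proof.
move=> alpha_gt0 mesh k kN; apply: upwind_sub_le => //.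
- by rewrite ltr0n; lia.
- by apply: meshw_gt0; lia.
- by apply: meshw_gt0; lia.
- by rewrite c_ge // mesh_node01 //; lia.
- by apply: mesh; lia.
Qed.

End UpwindMesh.

Theorem theorem2p5 (R : rcfType) (NL NI N : nat)
    (eps Clo Chi alpha : R) (c r : R -> R) (x : nat -> R) (lambda : R[i]) :
  N = (NL + NI).+1 ->
  0 < eps <= 1 ->
  0 < Clo ->
  (forall t, 0 <= t <= 1 -> Clo <= c t <= Chi) ->
  (forall t, 0 <= t <= 1 -> 0 <= r t) ->
  x 0%N = 0 -> x N = 1 -> (forall i, (i < N)%N -> x i < x i.+1) ->
  0 < alpha ->
  (forall i, (NL.+1 <= i <= N)%N -> alpha / N%:R <= meshw x i) ->
  let A := upwindA (NL + NI) eps x c r in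
  let M := precM A in
  eigenvalue (map_mx (real_complex R) (invmx M *m A)) lambda ->
  complex.Im lambda = 0 /\ 1 - 8 * eps * N%:R / (Clo * alpha) <= complex.Re lambda <= 1.
Proof.
move=> -> /andP [eps_gt0 _] Clo_gt0 c_bnd r_ge0 x0 xN x_incr alpha_gt0 mesh A M.
have c_ge t : 0 <= t <= 1 -> Clo <= c t by move=> /c_bnd /andP [].
have beta_gt0 : 0 < 2 * eps * (NL + NI).+1%:R / (Clo * alpha).
  by rewrite !divr_gt0 ?mulr_gt0 ?ltr0n.
rewrite /M /A upwindA_tridiag.
move/(tridiag_gauss_seidel_spectrum beta_gt0
  (upwind_coef_gt0 eps_gt0 Clo_gt0 c_ge r_ge0 x0 xN x_incr)
  (upwind_sub_le_sup eps_gt0 Clo_gt0 c_ge x0 xN x_incr alpha_gt0 mesh)).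
by rewrite !mulrA -natrM.
Qed.
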